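(* Let $\mathcal I$ be an admissible analytic $P$-ideal on $\mathbb N$. If $A\in\mathcal{I}\mathcal{A}$ and $G$ is the subgroup of $\mathbb T$ generated by $A$, then $G\in\mathcal{I}\mathcal{A}$.
   Context: $\mathbb T=\mathbb R/\mathbb Z$ identified with $[0,1]$ (0 and 1 identified), with addition mod 1; $\|x\|$ is the distance from $x$ to the nearest integer. An ideal $\mathcal I$ on $\mathbb N$ is a nonempty family of subsets of $\mathbb N$ closed under finite unions and subsets with $\mathbb N\notin\mathcal I$; admissible means all singletons belong to it; $P$-ideal means for every sequence $(A_n)$ in $\mathcal I$ there is $A\in\mathcal I$ with $A_n\setminus A$ finite for all $n$; analytic means analytic as a subset of $2^{\mathbb N}$. A sequence $(x_n)$ $\mathcal I$-converges to $x$ if for every open $U\ni x$, $\{n:x_n\notin U\}\in\mathcal I$. A set $X\subseteq[0,1]$ is $\mathcal I$-Arbault if there is an increasing sequence of naturals $(a_n)$ such that $\|a_nx\|$ $\mathcal I$-converges to $0$ for every $x\in X$; $\mathcal{I}\mathcal{A}$ denotes the family of all such sets. *)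

From HB Require Import structures.
From mathcomp Require Import all_boot all_order all_algebra.
From mathcomp Require Import all_classical all_reals all_analysis.
Set Implicit Arguments. Unset Strict Implicit. Unset Printing Implicit Defensive.
Import Order.TTheory GRing.Theory Num.Theory.
Import numFieldNormedType.Exports.
Local Open Scope classical_set_scope.
Local Open Scope ring_scope.

Definition is_ideal (I : set (set nat)) : Prop :=
  [/\ I !=set0,
      (forall A B : set nat, I A -> B `<=` A -> I B),
      (forall A B : set nat, I A -> I B -> I (A `|` B)) &
      ~ I setT].

Definition admissible (I : set (set nat)) : Prop := forall n : nat, I [set n].

Definition P_ideal (I : set (set nat)) : Prop :=
  forall An : nat -> set nat, (forall n, I (An n)) ->
    exists2 A, I A & forall n, finite_set (An n `\` A).

(* Continuity of a map from Baire space N^N to Cantor space 2^N (subsets of N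
   identified with their characteristic functions), w.r.t. product topologies. *)
Definition baire_cantor_continuous (f : (nat -> nat) -> set nat) : Prop :=
  forall (x : nat -> nat) (n : nat), exists m : nat,
    forall y : nat -> nat, (forall k, (k < m)%N -> y k = x k) ->
      forall k, (k < n)%N -> (f y k <-> f x k).

Definition analytic_family (I : set (set nat)) : Prop :=
  I = set0 \/ exists f : (nat -> nat) -> set nat,
    baire_cantor_continuous f /\ range f = I.

Definition I_converges (R : realType) (I : set (set nat)) (s : nat -> R) (l : R)
  : Prop :=
  forall U : set R, open U -> U l -> I [set n | ~ U (s n)].

Definition dist_int (R : realType) (x : R) : R :=
  let t := x - (Num.floor x)%:~R in Num.min t (1 - t).

Definition strictly_increasing (a : nat -> nat) : Prop := forall n, (a n < a n.+1)%N.

(* X subset of [0,1] (a model of T) is I-Arbault. *)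
Definition I_Arbault (R : realType) (I : set (set nat)) (X : set R) : Prop :=
  exists a : nat -> nat, strictly_increasing a /\
    forall x, X x -> I_converges I (fun n => dist_int ((a n)%:R * x)) 0.

(* The subgroup of T = R/Z generated by A, represented inside [0,1]:
   points of [0,1] congruent mod 1 to an integer combination of elements of A. *)
Definition generated_subgroup (R : realType) (A : set R) : set R :=
  [set y | 0 <= y <= 1 /\
    exists s : seq (int * R), (forall p, p \in s -> A p.2) /\
      exists z : int, y - \sum_(p <- s) p.1%:~R * p.2 = z%:~R].

(* The distance to the nearest integer is subadditive, satisfies
   [||k x|| <= |k| ||x||] for integers [k], and vanishes on integers.  Hence an
   element [y = z + sum k_i x_i] of the generated subgroup satisfies
   [||a_n y|| <= sum |k_i| ||a_n x_i||], and sequences I-converging to 0 are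
   stable under finite nonnegative combinations and under domination. *)
From HB Require Import structures.
From mathcomp Require Import all_boot all_order all_algebra.
From mathcomp Require Import all_classical all_reals all_analysis.
From mathcomp Require Import lra.
Import Order.TTheory GRing.Theory Num.Theory.
Import numFieldNormedType.Exports.
Local Open Scope classical_set_scope.
Local Open Scope ring_scope.

Section DistInt.
Variable R : realType.
Implicit Types (x y : R) (m k z : int).

Lemma dist_int_le_norm x m : dist_int x <= `|x - m%:~R|.
Proof.
have /andP[fl_le lt_fl] := floor_itv x; rewrite intrD in lt_fl.
rewrite /dist_int /= ge_min; apply/orP.
have [le_m_fl|lt_fl_m] := lerP m (Num.floor x).
- have m_le : (m%:~R : R) <= (Num.floor x)%:~R by rewrite ler_int.
  by left; rewrite ger0_norm; lra.
- have le_m : (Num.floor x + 1)%:~R <= (m%:~R : R) by rewrite ler_int lezD1.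
  by rewrite intrD in le_m; right; rewrite ler0_norm; lra.
Qed.

Lemma nearest_int_exists x : exists m, dist_int x = `|x - m%:~R|.
Proof.
have /andP[fl_le lt_fl] := floor_itv x; rewrite intrD in lt_fl.
rewrite /dist_int /=.
have [le_half|gt_half] := lerP (x - (Num.floor x)%:~R) (1 - (x - (Num.floor x)%:~R)).
- by exists (Num.floor x); rewrite ger0_norm //; lra.
- by exists (Num.floor x + 1); rewrite intrD ler0_norm; lra.
Qed.

Lemma dist_int_ge0 x : 0 <= dist_int x.
Proof. by have [m ->] := nearest_int_exists x. Qed.

Lemma dist_int_int z : dist_int (z%:~R : R) = 0.
Proof.
apply/eqP; rewrite eq_le dist_int_ge0 andbT.
by have := dist_int_le_norm z%:~R z; rewrite subrr normr0.
Qed.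

Lemma dist_intD x y : dist_int (x + y) <= dist_int x + dist_int y.
Proof.
have [m ->] := nearest_int_exists x; have [m' ->] := nearest_int_exists y.
apply: le_trans (dist_int_le_norm _ (m + m')) _.
by rewrite intrD opprD addrACA ler_normD.
Qed.

Lemma dist_intMz k x : dist_int (k%:~R * x) <= `|k%:~R| * dist_int x.
Proof.
have [m ->] := nearest_int_exists x.
by rewrite -normrM mulrBr -intrM dist_int_le_norm.
Qed.

Lemma dist_int_sum (I : Type) (s : seq I) (F : I -> R) :
  dist_int (\sum_(i <- s) F i) <= \sum_(i <- s) dist_int (F i).
Proof.
apply: (big_ind2 (fun x y => dist_int x <= y)).
- by rewrite -(mulr0z 1) dist_int_int.
- by move=> x1 y1 x2 y2 le1 le2; apply: le_trans (dist_intD _ _) (lerD le1 le2).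
- by [].
Qed.

Lemma dist_int_int_comb (I : Type) z (s : seq I) (k : I -> int) (x : I -> R) :
  dist_int (z%:~R + \sum_(i <- s) (k i)%:~R * x i)
    <= \sum_(i <- s) `|(k i)%:~R| * dist_int (x i).
Proof.
apply: le_trans (dist_intD _ _) _; rewrite dist_int_int add0r.
apply: le_trans (dist_int_sum _ _ _) _.
by apply: ler_sum => i _; apply: dist_intMz.
Qed.

End DistInt.

Section IConvergesToZero.
Variables (R : realType) (I : set (set nat)).
Hypothesis idealI : is_ideal I.
Implicit Types g h : nat -> R.

Let I_sub {A B : set nat} : I A -> B `<=` A -> I B.
Proof. by case: idealI => _ + _ _; apply. Qed.

Let I_setU {A B : set nat} : I A -> I B -> I (A `|` B).
Proof. by case: idealI => _ _ + _; apply. Qed.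

Let I_set0 : I set0.
Proof. by case: idealI => [[A IA] _ _ _]; apply: (I_sub IA). Qed.

Lemma I_converges0P g :
  I_converges I g 0 <-> forall e : R, 0 < e -> I [set n | e <= `|g n|].
Proof.
split=> [g0 e e_gt0 | small_g U oU U0].
- apply: I_sub (g0 _ (ball_open 0 e) (ballxx 0 e_gt0)) _ => n /= e_le.
  by rewrite -ball_normE /ball_ /= sub0r normrN ltNge e_le.
- have /nbhs_ballP[e /= e_gt0 ballU] : nbhs (0 : R) U by apply: open_nbhs_nbhs.
  apply: I_sub (small_g e e_gt0) _ => n /= notU; rewrite leNgt; apply/negP => lt_e.
  by apply: notU; apply: ballU; rewrite -ball_normE /ball_ /= sub0r normrN.
Qed.

Lemma I_converges0_le g h : (forall n, `|g n| <= h n) ->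
  I_converges I h 0 -> I_converges I g 0.
Proof.
move=> le_gh /I_converges0P small_h; apply/I_converges0P => e e_gt0.
apply: I_sub (small_h e e_gt0) _ => n /= e_le.
by rewrite (le_trans e_le (le_trans (le_gh n) (ler_norm _))).
Qed.

Lemma I_converges0D g h : I_converges I g 0 -> I_converges I h 0 ->
  I_converges I (fun n => g n + h n) 0.
Proof.
move=> /I_converges0P small_g /I_converges0P small_h.
apply/I_converges0P => e e_gt0.
have e2_gt0 : 0 < e / 2 by rewrite divr_gt0.
apply: I_sub (I_setU (small_g _ e2_gt0) (small_h _ e2_gt0)) _ => n /= e_le.
have := ler_normD (g n) (h n).
by case: (lerP (e / 2) `|g n|) => [|lt_g]; [left | right; lra].
Qed.

Lemma I_converges0Z (c : R) g : I_converges I g 0 ->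
  I_converges I (fun n => c * g n) 0.
Proof.
move=> /I_converges0P small_g; apply/I_converges0P => e e_gt0.
have c1_gt0 : 0 < `|c| + 1 by rewrite ltr_wpDl.
have d_gt0 : 0 < e / (`|c| + 1) by rewrite divr_gt0.
apply: I_sub (small_g _ d_gt0) _ => n /=; rewrite normrM => e_le.
rewrite ler_pdivrMr // leNgt; apply/negP => lt_e.
by have := normr_ge0 (g n); have := normr_ge0 c; nra.
Qed.

Lemma I_converges0_sum (J : eqType) (s : seq J) (F : J -> nat -> R) :
  (forall j, j \in s -> I_converges I (F j) 0) ->
  I_converges I (fun n => \sum_(j <- s) F j n) 0.
Proof.
elim: s => [_|j s IHs Fs0].
- apply/I_converges0P => e e_gt0; apply: I_sub I_set0 _ => n /=.
  by rewrite big_nil normr0 leNgt e_gt0.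
- under eq_fun do rewrite big_cons.
  apply: I_converges0D; first by apply: Fs0; rewrite mem_head.
  by apply: IHs => i i_s; apply: Fs0; rewrite in_cons i_s orbT.
Qed.

End IConvergesToZero.

Theorem proposition3p4 (R : realType) (I : set (set nat)) (A : set R) :
  is_ideal I -> admissible I -> analytic_family I -> P_ideal I ->
  A `<=` [set x | 0 <= x <= 1] ->
  I_Arbault I A -> I_Arbault I (generated_subgroup A).
Proof.
move=> idealI _ _ _ _ [a [a_incr a_conv]]; exists a; split => // y [_ [s [sA [z yE]]]].
pose bound n := \sum_(p <- s) `|p.1%:~R| * dist_int ((a n)%:R * p.2).
apply: (@I_converges0_le _ _ idealI _ bound) => [n|].
- have ayE : (a n)%:R * y =
      ((a n)%:Z * z)%:~R + \sum_(p <- s) p.1%:~R * ((a n)%:R * p.2).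
    rewrite -(subrK (\sum_(p <- s) p.1%:~R * p.2) y) yE mulrDr intrM mulr_sumr.
    by congr (_ + _); apply: eq_bigr => p _; rewrite mulrCA.
  by rewrite ger0_norm ?dist_int_ge0 // ayE (@dist_int_int_comb R _ _ s fst).
- apply: I_converges0_sum => // p /sA Ap.
  by apply: (@I_converges0Z R I idealI); apply: a_conv.
Qed.
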